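(* There is a meager set $M\subseteq(\omega^\omega)^2$ such that for every superperfect tree $T\subseteq\omega^{<\omega}$ there are $f\neq g$ in $[T]$ with $\langle f,g\rangle\in M$.
   Context: A tree $T\subseteq\omega^{<\omega}$ is superperfect if for every $\sigma\in T$ there is $\tau\supseteq\sigma$ in $T$ such that $\tau^\frown\langle n\rangle\in T$ for infinitely many $n$; $[T]$ is the set of infinite branches of $T$. *)

From mathcomp Require Import all_boot all_order all_algebra.
From mathcomp Require Import all_classical all_reals all_analysis.
Set Implicit Arguments. Unset Strict Implicit. Unset Printing Implicit Defensive.
Local Open Scope classical_set_scope.

(* Baire space omega^omega : product topology of the discrete space nat. *)
Definition baire := {ptws nat -> nat}.

Definition nowhere_dense (X : topologicalType) (A : set X) : Prop :=
  interior (closure A) = set0.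

Definition meager (X : topologicalType) (A : set X) : Prop :=
  exists N : nat -> set X,
    (forall n, nowhere_dense (N n)) /\ A `<=` \bigcup_n N n.

Definition is_tree (T : set (seq nat)) : Prop :=
  T [::] /\ forall s t : seq nat, prefix s t -> T t -> T s.

Definition body (T : set (seq nat)) : set baire :=
  [set f | forall n : nat, T (mkseq f n)].

Definition superperfect (T : set (seq nat)) : Prop :=
  is_tree T /\
  forall sigma, T sigma ->
    exists tau, T tau /\ prefix sigma tau /\
      infinite_set [set n : nat | T (rcons tau n)].

(* Let R_k = [reaches_from k] be the set of pairs (f, g) such that for every
   n >= k some m <= n has max (f m) (g m) >= n.  Each R_k is closed, and it has
   empty interior: truncating f and g to finitely many nonzero values gives
   nearby pairs whose values are bounded.  So the union of the R_k is meager.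
   In a superperfect tree, grow two branches alternately through infinitely
   splitting nodes: when one branch passes a splitting node at level p, it
   takes there a successor at least the level of the next splitting node above
   the other branch.  The intervals [p, successor] then cover every n beyond
   the first splitting level, where the two branches are chosen to differ. *)

From mathcomp Require Import all_boot all_order all_algebra.
From mathcomp Require Import all_classical all_reals all_analysis.

Set Implicit Arguments.
Unset Strict Implicit.
Unset Printing Implicit Defensive.

Local Open Scope classical_set_scope.

Lemma near_agree (f : baire) (n : nat) :
  \forall g \near f, forall i, i < n -> g i = f i.
Proof.
have agree_at (i : nat) : \forall g \near f, g i = f i.
  have cvg_i : (fun g : baire => g i) @ f --> f i.
    exact: (@proj_continuous nat (fun=> nat) i f).
  (* [nat] is discrete: a neighbourhood of [v] is any set containing [v]. *)
  by apply: (cvg_i (fun v => v = f i)); move=> ? ->.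
have : \forall g \near f, forall i : 'I_n, (g : baire) i = f i.
  exact: (@filter_forall baire 'I_n (fun i (g : baire) => g i = f i) (nbhs f) _
          (fun i => agree_at i)).
by apply: filterS => g agree i lt_in; exact: (agree (Ordinal lt_in)).
Qed.

Lemma near_agree_pair (x : baire * baire) (n : nat) :
  \forall y \near x, forall i, i < n -> y.1 i = x.1 i /\ y.2 i = x.2 i.
Proof.
have agree1 : \forall y \near x, forall i, i < n -> y.1 i = x.1 i.
  exact: cvg_fst (near_agree x.1 n).
have agree2 : \forall y \near x, forall i, i < n -> y.2 i = x.2 i.
  exact: cvg_snd (near_agree x.2 n).
by apply: filterS2 agree1 agree2 => y a1 a2 i lt_in; rewrite a1 ?a2.
Qed.

Definition trunc (j : nat) (f : baire) : baire := fun i => if i < j then f i else 0.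

Lemma trunc_cvg (f : baire) : trunc^~ f @ \oo --> f.
Proof.
apply/pointwise_cvgP => i; apply: cvg_near_cst.
by exists i.+1 => // j /= ij; rewrite /trunc ij.
Qed.

Definition reaches_from (k : nat) : set (baire * baire) :=
  [set x | forall n, k <= n -> exists2 m, m <= n & n <= maxn (x.1 m) (x.2 m)].

Lemma closed_reaches_from k : closed (reaches_from k).
Proof.
move=> x x_cl n le_kn.
have [y [reach_y agree]] := x_cl _ (near_agree_pair x n.+1).
have [m le_mn] := reach_y n le_kn.
by have [-> ->] := agree m le_mn; exists m.
Qed.

Lemma nowhere_dense_reaches_from k : nowhere_dense (reaches_from k).
Proof.
rewrite /nowhere_dense -(closure_id _).1; last exact: closed_reaches_from.
rewrite -subset0 => -[f g] reach_near_fg.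
have trunc_fg_cvg : (fun j => (trunc j f, trunc j g)) @ \oo --> (f, g).
  exact: cvg_pair (@trunc_cvg f) (@trunc_cvg g).
have [j _ reach_trunc] := trunc_fg_cvg _ reach_near_fg.
pose B := \max_(i < j) maxn (f i) (g i).
have [m _] := reach_trunc j (leqnn j) (k + B.+1) (leq_addr _ _).
rewrite /trunc /=; case: ifP => [lt_mj|_]; last by rewrite maxnn leqn0 addnS.
have le_B : maxn (f m) (g m) <= B.
  exact: (@leq_bigmax _ (fun i : 'I_j => maxn (f i) (g i)) (Ordinal lt_mj)).
by move/leq_trans/(_ le_B); rewrite addnS ltnNge leq_addl.
Qed.

Lemma nth_prefix (T : eqType) (x0 : T) (s t : seq T) i :
  prefix s t -> i < size s -> nth x0 t i = nth x0 s i.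
Proof. by move=> /prefixP [u ->] lt_is; rewrite nth_cat lt_is. Qed.

Section ChainLimit.

Variable Y : nat -> seq nat.
Hypothesis Y_prefix : forall j, prefix (Y j) (Y j.+1).
Hypothesis Y_size : forall j, j < size (Y j).

Definition chain_lim : baire := fun i => nth 0 (Y i) i.

Lemma chain_prefix (i j : nat) : i <= j -> prefix (Y i) (Y j).
Proof. exact: homo_leq (@prefix_refl _) (@prefix_trans _) Y_prefix i j. Qed.

Lemma nth_chain_lim j i : i < size (Y j) -> nth 0 (Y j) i = chain_lim i.
Proof.
move=> lt_i_Yj; rewrite /chain_lim; case: (leqP j i) => [le_ji|lt_ij].
  by rewrite (nth_prefix _ (chain_prefix le_ji)).
by rewrite (nth_prefix _ (chain_prefix (ltnW lt_ij))).
Qed.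

Lemma chain_lim_prefix n : prefix (mkseq chain_lim n) (Y n).
Proof.
have le_n_Yn : n <= size (Y n) by exact: ltnW.
rewrite prefixE size_mkseq; apply/eqP/(@eq_from_nth _ 0).
  by rewrite size_take_min size_mkseq (minn_idPl le_n_Yn).
move=> i; rewrite size_take_min (minn_idPl le_n_Yn) => lt_in.
by rewrite nth_take // nth_mkseq // nth_chain_lim // (leq_trans lt_in).
Qed.

Lemma body_chain_lim (T : set (seq nat)) :
  is_tree T -> (forall j, T (Y j)) -> body T chain_lim.
Proof. move=> [_ T_prefix] TY n; exact: T_prefix (chain_lim_prefix n) (TY n). Qed.

End ChainLimit.

Section Interleaving.

Variable T : set (seq nat).
Hypothesis T_tree : is_tree T.
Variable splitting : seq nat -> seq nat.
Hypothesis splittingP : forall s, T s -> T (splitting s) /\ prefix s (splitting s).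
Variable child : seq nat -> nat -> nat.
Hypothesis childP : forall s L, T s -> T (rcons (splitting s) (child s L)) /\ L <= child s L.

Definition grow (s : seq nat) (L : nat) := rcons (splitting s) (child s L).

Lemma T_grow s L : T s -> T (grow s L).
Proof. move=> Ts; exact: (childP L Ts).1. Qed.

Lemma prefix_grow s L : T s -> prefix s (grow s L).
Proof. by move=> /splittingP [_ pre]; apply: prefix_trans pre (prefix_rcons _ _). Qed.

Lemma size_grow s L : T s -> size s < size (grow s L).
Proof. by move=> /splittingP [_ /size_prefix]; rewrite size_rcons ltnS. Qed.

Lemma nth_grow s L : nth 0 (grow s L) (size (splitting s)) = child s L.
Proof. by rewrite nth_rcons ltnn eqxx. Qed.

Definition root_left := grow [::] 0.
(* Above [child [::] 0], so that the two branches differ. *)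
Definition root_right := grow [::] (maxn (size (splitting root_left)) (child [::] 0).+1).

Fixpoint node_pair (j : nat) : seq nat * seq nat :=
  if j is j'.+1 then
    let p := node_pair j' in (p.2, grow p.1 (size (splitting p.2)))
  else (root_left, root_right).

Definition node (j : nat) : seq nat := (node_pair j).1.

Lemma nodeSS j : node j.+2 = grow (node j) (size (splitting (node j.+1))).
Proof. by []. Qed.

Lemma T_node j : T (node j).
Proof.
suff T_node2 : T (node j) /\ T (node j.+1) by case: T_node2.
elim: j => [|j [T_j T_j1]]; last by split; [|rewrite nodeSS; apply: T_grow].
by split; apply: T_grow; case: T_tree.
Qed.

Definition covered_by (s : seq nat) (n : nat) :=
  exists2 m, m <= n & m < size s /\ n <= nth 0 s m.

Lemma covered_by_prefix s t n : prefix s t -> covered_by s n -> covered_by t n.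
Proof.
move=> le_st [m le_mn [lt_ms le_n]]; exists m => //; split.
  exact: leq_trans lt_ms (size_prefix le_st).
by rewrite (nth_prefix _ le_st).
Qed.

Lemma node_covers j n : size (splitting [::]) <= n <= size (splitting (node j)) ->
  covered_by (node j) n \/ covered_by (node j.+1) n.
Proof.
elim: j n => [|j IH] n /andP [le_root le_n_split].
  right; exists (size (splitting [::])) => //.
  rewrite /node /= /root_right nth_grow size_rcons; split => //.
  apply: leq_trans le_n_split (leq_trans (leq_maxl _ _) (childP _ T_tree.1).2).
have [le_n_split_j|lt_split_j_n] := leqP n (size (splitting (node j))).
  have [cov_j|cov_j1] := IH n (introT andP (conj le_root le_n_split_j)); last by left.
  by right; rewrite nodeSS; apply: covered_by_prefix (prefix_grow _ (T_node j)) cov_j.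
right; exists (size (splitting (node j))); first exact: ltnW.
rewrite nodeSS nth_grow size_rcons; split => //.
exact: leq_trans le_n_split (childP _ (T_node j)).2.
Qed.

Definition branch (r : nat) : baire := chain_lim (fun j => node (r + j.*2)).

Lemma prefix_branch_nodes r j : prefix (node (r + j.*2)) (node (r + j.+1.*2)).
Proof. by rewrite doubleS !addnS; apply: prefix_grow; apply: T_node. Qed.

Lemma size_branch_nodes r j : j < size (node (r + j.*2)).
Proof.
elim: j => [|j IH].
  by rewrite addn0; case: r => [|[|r]]; rewrite /node /= /grow size_rcons.
by rewrite doubleS !addnS nodeSS; apply: leq_ltn_trans IH (size_grow _ (T_node _)).
Qed.

Lemma body_branch r : body T (branch r).
Proof.
exact: (body_chain_lim (@prefix_branch_nodes r) (@size_branch_nodes r) T_tree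
  (fun j => T_node _)).
Qed.

Lemma nth_branch r j i :
  i < size (node (r + j.*2)) -> nth 0 (node (r + j.*2)) i = branch r i.
Proof. exact: (nth_chain_lim (@prefix_branch_nodes r) (@size_branch_nodes r)). Qed.

Lemma branch0_neq_branch1 : branch 0 <> branch 1.
Proof.
move=> /(congr1 (fun f : baire => f (size (splitting [::])))).
rewrite -(@nth_branch 0 0) -?(@nth_branch 1 0) /node /= ?nth_grow ?size_rcons //.
move=> eq_child.
have := (childP (maxn (size (splitting root_left)) (child [::] 0).+1) T_tree.1).2.
by rewrite -eq_child geq_max ltnn andbF.
Qed.

Lemma reaches_from_branches : reaches_from (size (splitting [::])) (branch 0, branch 1).
Proof.
move=> n le_root_n.
have le_n_split : n <= size (splitting (node n.*2)).
  exact: leq_trans (ltnW (size_branch_nodes 0 n)) (size_prefix (splittingP (T_node _)).2).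
have [] := node_covers (introT andP (conj le_root_n le_n_split)).
  move=> [m le_mn [lt_m le_n]]; exists m => //.
  by rewrite /= leq_max -(@nth_branch 0 n _ lt_m) le_n.
move=> [m le_mn [lt_m le_n]]; exists m => //.
by rewrite /= leq_max -(@nth_branch 1 n _ lt_m) le_n orbT.
Qed.

End Interleaving.

Lemma infinite_set_nat_unbounded (A : set nat) (L : nat) :
  infinite_set A -> exists2 x, A x & L <= x.
Proof.
move=> /infinite_setD/(_ (finite_II L))/infinite_setN0 [x [Ax /negP]].
by rewrite -leqNgt; exists x.
Qed.

Lemma superperfect_choice (T : set (seq nat)) : superperfect T ->
  exists (splitting : seq nat -> seq nat) (child : seq nat -> nat -> nat),
    (forall s, T s -> T (splitting s) /\ prefix s (splitting s)) /\
    (forall s L, T s -> T (rcons (splitting s) (child s L)) /\ L <= child s L).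
Proof.
move=> [_ T_sp].
have splitting_above s : exists t, T s ->
    [/\ T t, prefix s t & infinite_set [set n | T (rcons t n)]].
  have [/T_sp [t [T_t [pre_st inf_t]]]|notT_s] := pselect (T s); first by exists t.
  by exists s => /notT_s.
have [splitting splittingP] := choice splitting_above.
have child_above (p : seq nat * nat) : exists x, T p.1 ->
    T (rcons (splitting p.1) x) /\ p.2 <= x.
  case: p => s L; have [/splittingP [_ _ inf_s]|notT_s] := pselect (T s); last first.
    by exists 0 => /notT_s.
  by have [x T_x le_Lx] := infinite_set_nat_unbounded L inf_s; exists x.
have [child childP] := choice child_above.
exists splitting, (fun s L => child (s, L)); split => [s /splittingP [] //|s L T_s].
exact: (childP (s, L)).
Qed.

Theorem proposition5p3 :
  exists M : set (baire * baire)%type,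
    meager M /\
    forall T : set (seq nat), superperfect T ->
      exists f g : baire, body T f /\ body T g /\ f <> g /\ M (f, g).
Proof.
exists (\bigcup_k reaches_from k); split.
  by exists reaches_from; split; [exact: nowhere_dense_reaches_from|].
move=> T T_sp; have [T_tree _] := T_sp.
have [splitting [child [splittingP childP]]] := superperfect_choice T_sp.
exists (branch splitting child 0), (branch splitting child 1).
split; first exact: body_branch.
split; first exact: body_branch.
split; first exact: (branch0_neq_branch1 T_tree splittingP childP).
exists (size (splitting [::])) => //.
exact: (reaches_from_branches T_tree splittingP childP).
Qed.
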